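(* Let $[0,1]$ be the closed real unit interval, regarded as a complete lattice with $\sup$ and $\inf$, and let $\mathbf L=[0,1]\times\{0,1\}$ be the product lattice (componentwise order, $0<1$). Then every element of $\mathbf L$ is a non-generator, except for $(0,1)$ and $(1,0)$. Hence the set $\Gamma$ of non-generators of $\mathbf L$ is not a complete sublattice, and the complete sublattice generated by $\Gamma$ is all of $L$.
   Context: A complete sublattice of a complete lattice $\mathbf L$ is a subset $T\subseteq L$ closed under arbitrary meets and joins computed in $L$, including those of the empty set (so $T$ contains the minimum and maximum of $L$). For $X\subseteq L$, $\langle X\rangle$ is the intersection of all complete sublattices containing $X$, and $\langle X,a\rangle=\langle X\cup\{a\}\rangle$. An element $a$ is a non-generator if for every $X\subseteq L$, $\langle X,a\rangle=L$ implies $\langle X\rangle=L$. *)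

From HB Require Import structures.
From mathcomp Require Import all_boot all_order all_algebra.
From mathcomp Require Import boolp classical_sets reals.
Set Implicit Arguments. Unset Strict Implicit. Unset Printing Implicit Defensive.
Import Order.TTheory GRing.Theory Num.Theory.
Local Open Scope ring_scope.
Local Open Scope classical_set_scope.

Section LatticeDefs.
Variable R : realType.

(* The carrier L = [0,1] x {0,1}, with {0,1} encoded as bool (false < true). *)
Definition Lcar : set (R * bool) := [set p | 0 <= p.1 <= 1].

Definition Lle (p q : R * bool) : Prop := p.1 <= q.1 /\ (p.2 ==> q.2).

Definition is_join (S : set (R * bool)) (x : R * bool) : Prop :=
  Lcar x /\ (forall y, S y -> Lle y x) /\
  (forall z, Lcar z -> (forall y, S y -> Lle y z) -> Lle x z).

Definition is_meet (S : set (R * bool)) (x : R * bool) : Prop :=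
  Lcar x /\ (forall y, S y -> Lle x y) /\
  (forall z, Lcar z -> (forall y, S y -> Lle z y) -> Lle z x).

Definition complete_sublattice (T : set (R * bool)) : Prop :=
  T `<=` Lcar /\
  (forall S x, S `<=` T -> is_join S x -> T x) /\
  (forall S x, S `<=` T -> is_meet S x -> T x).

Definition generated (X : set (R * bool)) : set (R * bool) :=
  [set p | forall T, complete_sublattice T -> X `<=` T -> T p].

Definition non_generator (a : R * bool) : Prop :=
  forall X, X `<=` Lcar -> generated (X `|` [set a]) = Lcar -> generated X = Lcar.

Definition Gamma : set (R * bool) := [set a | Lcar a /\ non_generator a].

End LatticeDefs.

(* A proper complete sublattice T of L either misses (0, 1), or misses (1, 0),
   or contains both.  In the first case the top layer of T lies above some
   m > 0, in the second its bottom layer lies below some n < 1.  In the third,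
   (r, 0) \/ (0, 1) = (r, 1) and (r, 1) /\ (1, 0) = (r, 0) force T = A x {0, 1}
   with A a proper closed subset of [0, 1], so T avoids a strip ]p, q[ x {0, 1}.
   Each of these three conditions defines a proper complete sublattice, which
   can be chosen to contain any given element other than (0, 1) and (1, 0); such
   an element therefore never completes a non-generating set.  Conversely,
   (0, 1) generates L together with the proper complete sublattice of all
   (x, 0) and (1, 1), and dually for (1, 0).  Finally (1, 0) is the join of the
   non-generators (x, 0), x < 1, and (0, 1) the meet of the (x, 1), x > 0. *)

From HB Require Import structures.
From mathcomp Require Import all_boot all_order all_algebra.
From mathcomp Require Import boolp classical_sets set_interval reals real_interval.
Import Order.TTheory GRing.Theory Num.Theory.
Local Open Scope ring_scope.
Local Open Scope classical_set_scope.

Set Implicit Arguments. Unset Strict Implicit.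

Section ProductLattice.
Variable R : realType.
Implicit Types (S T U X : set (R * bool)) (a x y : R * bool) (E : set R) (r : R).

Lemma Lcar0 b : Lcar (0 : R, b).
Proof. by rewrite /Lcar /= lexx ler01. Qed.

Lemma Lcar1 b : Lcar (1 : R, b).
Proof. by rewrite /Lcar /= lexx ler01. Qed.

Lemma is_join_set0 : is_join set0 (0 : R, false).
Proof. by split; [exact: Lcar0 | split=> // z /andP[]]. Qed.

Lemma is_meet_set0 : is_meet set0 (1 : R, true).
Proof. by split; [exact: Lcar1 | split=> // z /andP[_ z1] _; split=> //; case: z.2]. Qed.

Lemma is_join_snd S x : is_join S x -> x.2 -> exists2 y, S y & y.2.
Proof.
move=> [Lx [ub lub]] x2; apply: contrapT => noS.
have [_] : Lle x (x.1, false).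
  apply: lub => // y Sy; split; first by have [] := ub y Sy.
  by apply/implyP => y2; exfalso; apply: noS; exists y.
by rewrite x2.
Qed.

Lemma is_meet_snd S x : is_meet S x -> ~~ x.2 -> exists2 y, S y & ~~ y.2.
Proof.
move=> [Lx [lb glb]] x2; apply: contrapT => noS.
have [_] : Lle (x.1, true) x.
  apply: glb => // y Sy; split; first by have [] := lb y Sy.
  by apply: contrapT => /negP y2; apply: noS; exists y.
by rewrite (negbTE x2).
Qed.

Lemma is_join_fst_le S x r : is_join S x -> 0 <= r <= 1 ->
  (forall y, S y -> y.1 <= r) -> x.1 <= r.
Proof.
move=> [_ [_ lub]] r01 Sr; have [] // := lub (r, true) r01.
by move=> y Sy; split; [exact: Sr | case: y.2 {Sy}].
Qed.

Lemma is_meet_fst_ge S x r : is_meet S x -> 0 <= r <= 1 ->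
  (forall y, S y -> r <= y.1) -> r <= x.1.
Proof.
move=> [_ [_ glb]] r01 Sr; have [] // := glb (r, false) r01.
by move=> y Sy; split; [exact: Sr | case: y.2 {Sy}].
Qed.

Lemma is_join_bottom E : E !=set0 -> (forall r, E r -> 0 <= r <= 1) ->
  is_join [set (r, false) | r in E] (sup E, false).
Proof.
move=> [r Er] E01; have ubE1 : ubound E 1 by move=> s /E01 /andP[].
have supE : ubound E (sup E) by apply: ub_le_sup; exists 1.
have [r0 _] := andP (E01 r Er).
split; first by rewrite /Lcar /= (le_trans r0 (supE r Er)) ge_sup //; exists r.
split=> [_ [s Es <-] | z _ ub]; first by split=> //; exact: supE.
split=> //; apply: ge_sup; first by exists r.
by move=> s Es; have [] := ub (s, false) (ex_intro2 _ _ s Es erefl).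
Qed.

Lemma is_meet_top E : E !=set0 -> (forall r, E r -> 0 <= r <= 1) ->
  is_meet [set (r, true) | r in E] (inf E, true).
Proof.
move=> [r Er] E01; have lbE0 : lbound E 0 by move=> s /E01 /andP[].
have infE : lbound E (inf E) by apply: ge_inf; exists 0.
have [_ r1] := andP (E01 r Er).
split; first by rewrite /Lcar /= (le_trans (infE r Er) r1) lb_le_inf //; exists r.
split=> [_ [s Es <-] | z _ lb]; first by split=> //; exact: infE.
split; last by rewrite implybT.
apply: lb_le_inf; first by exists r.
by move=> s Es; have [] := lb (s, true) (ex_intro2 _ _ s Es erefl).
Qed.

Lemma is_join_lift r : 0 <= r <= 1 -> is_join [set (r, false); (0, true)] (r, true).
Proof.
move=> r01; split=> //; split=> [y [->|->] | z _ ub]; first by [].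
  by split=> //; case/andP: r01.
have [rz _] := ub _ (or_introl erefl); have [_] := ub _ (or_intror erefl).
by split.
Qed.

Lemma is_meet_drop r : 0 <= r <= 1 -> is_meet [set (r, true); (1, false)] (r, false).
Proof.
move=> r01; split=> //; split=> [y [->|->] | z _ lb]; first by split=> //; rewrite implybT.
  by split=> //; case/andP: r01.
have [zr _] := lb _ (or_introl erefl); have [_] := lb _ (or_intror erefl).
by split.
Qed.

Lemma sublattice_sub T : complete_sublattice T -> T `<=` @Lcar R.
Proof. by case. Qed.

Lemma sublattice_join T S x : complete_sublattice T -> S `<=` T -> is_join S x -> T x.
Proof. by move=> [_ [TJ _]]; exact: TJ. Qed.

Lemma sublattice_meet T S x : complete_sublattice T -> S `<=` T -> is_meet S x -> T x.
Proof. by move=> [_ [_ TM]]; exact: TM. Qed.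

Lemma sublattice_bottom T : complete_sublattice T -> T (0, false).
Proof. by move=> cT; apply: sublattice_join cT (sub0set _) is_join_set0. Qed.

Lemma sublattice_top T : complete_sublattice T -> T (1, true).
Proof. by move=> cT; apply: sublattice_meet cT (sub0set _) is_meet_set0. Qed.

Lemma sublattice_sup_bottom T E : complete_sublattice T -> E !=set0 ->
  (forall r, E r -> T (r, false)) -> T (sup E, false).
Proof.
move=> cT E0 ET; have E01 r : E r -> 0 <= r <= 1 by move/ET/(sublattice_sub cT).
by apply: sublattice_join cT _ (is_join_bottom E0 E01) => _ [r Er <-]; exact: ET.
Qed.

Lemma sublattice_inf_top T E : complete_sublattice T -> E !=set0 ->
  (forall r, E r -> T (r, true)) -> T (inf E, true).
Proof.
move=> cT E0 ET; have E01 r : E r -> 0 <= r <= 1 by move/ET/(sublattice_sub cT).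
by apply: sublattice_meet cT _ (is_meet_top E0 E01) => _ [r Er <-]; exact: ET.
Qed.

Lemma sublattice_swap T : complete_sublattice T ->
  T (0, true) -> T (1, false) -> forall r b b', T (r, b) -> T (r, b').
Proof.
move=> cT T0 T1 r b b' Trb; have r01 : 0 <= r <= 1 := sublattice_sub cT Trb.
have [Tr0 Tr1] : T (r, false) /\ T (r, true).
  case: b Trb => Tr; split=> //.
    by apply: sublattice_meet cT _ (is_meet_drop r01) => y [->|->].
  by apply: sublattice_join cT _ (is_join_lift r01) => y [->|->].
by case: b'.
Qed.

Lemma complete_sublattice_Lcar : complete_sublattice (@Lcar R).
Proof. by split=> //; split=> S x _ []. Qed.

Lemma sub_generated X : X `<=` generated X.
Proof. by move=> p Xp T _; apply. Qed.

Lemma generated_min X T : complete_sublattice T -> X `<=` T -> generated X `<=` T.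
Proof. by move=> cT XT p; apply. Qed.

Lemma complete_sublattice_generated X : X `<=` @Lcar R -> complete_sublattice (generated X).
Proof.
move=> XL; split; first exact: generated_min complete_sublattice_Lcar XL.
split=> S x SX Sx T cT XT.
- exact: sublattice_join cT (fun y Sy => SX y Sy T cT XT) Sx.
- exact: sublattice_meet cT (fun y Sy => SX y Sy T cT XT) Sx.
Qed.

Lemma generated_id T : complete_sublattice T -> generated T = T.
Proof.
by move=> cT; apply/seteqP; split; [exact: generated_min | exact: sub_generated].
Qed.

Lemma generated_Lcar X : X `<=` @Lcar R ->
  (forall T, complete_sublattice T -> X `<=` T -> @Lcar R `<=` T) -> generated X = @Lcar R.
Proof.
move=> XL full; apply/seteqP; split; first exact: generated_min complete_sublattice_Lcar XL.
by move=> p Lp T cT XT; exact: full.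
Qed.

Definition extendable T a :=
  exists U, [/\ complete_sublattice U, U <> @Lcar R, T `<=` U & U a].

Lemma non_generator_extendable a :
  (forall T, complete_sublattice T -> T <> @Lcar R -> extendable T a) -> non_generator a.
Proof.
move=> ext X XL genXa; apply: contrapT => genX.
have [U [cU UL XU Ua]] := ext _ (complete_sublattice_generated XL) genX.
apply: UL; apply/seteqP; split; first exact: sublattice_sub.
rewrite -genXa; apply: generated_min => // p [Xp|->] //.
exact: XU (sub_generated Xp).
Qed.

Lemma not_non_generator X a : complete_sublattice X -> X <> @Lcar R ->
  generated (X `|` [set a]) = @Lcar R -> ~ non_generator a.
Proof.
move=> cX XL genXa ng; apply: XL; rewrite -(generated_id cX).
exact: ng (sublattice_sub cX) genXa.
Qed.

Definition top_ge (m : R) := [set p | Lcar p /\ (p.2 -> m <= p.1)].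
Definition bottom_le (n : R) := [set p | Lcar p /\ (~~ p.2 -> p.1 <= n)].
Definition avoid_itv (u v : R) := [set p | Lcar p /\ (p.1 <= u \/ v <= p.1)].

Lemma complete_sublattice_top_ge m : 0 <= m <= 1 -> complete_sublattice (top_ge m).
Proof.
move=> m01; split; first by move=> p [].
split=> S x ST Sx; split; try by case: Sx.
- move=> x2; have [y Sy y2] := is_join_snd Sx x2.
  have [_ [ub _]] := Sx; have [yx _] := ub y Sy.
  by have [_ /(_ y2) my] := ST y Sy; exact: le_trans yx.
- move=> x2; apply: (is_meet_fst_ge Sx m01) => y Sy.
  have [_ [lb _]] := Sx; have [_] := lb y Sy; rewrite x2 => /= y2.
  by have [_] := ST y Sy; apply.
Qed.

Lemma complete_sublattice_bottom_le n : 0 <= n <= 1 -> complete_sublattice (bottom_le n).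
Proof.
move=> n01; split; first by move=> p [].
split=> S x ST Sx; split; try by case: Sx.
- move=> x2; apply: (is_join_fst_le Sx n01) => y Sy.
  have [_ [ub _]] := Sx; have [_] := ub y Sy; rewrite (negbTE x2) implybF => y2.
  by have [_] := ST y Sy; apply.
- move=> x2; have [y Sy y2] := is_meet_snd Sx x2.
  have [_ [lb _]] := Sx; have [xy _] := lb y Sy.
  by have [_ /(_ y2) yn] := ST y Sy; exact: le_trans yn.
Qed.

Lemma complete_sublattice_avoid_itv u v : 0 <= u <= 1 -> 0 <= v <= 1 ->
  complete_sublattice (avoid_itv u v).
Proof.
move=> u01 v01; split; first by move=> p [].
split=> S x ST Sx; split; try by case: Sx.
- have [[y Sy vy]|noS] := pselect (exists2 y, S y & v <= y.1).
    by right; have [_ [ub _]] := Sx; have [yx _] := ub y Sy; exact: le_trans yx.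
  left; apply: (is_join_fst_le Sx u01) => y Sy.
  by have [_ [//|vy]] := ST y Sy; exfalso; apply: noS; exists y.
- have [[y Sy yu]|noS] := pselect (exists2 y, S y & y.1 <= u).
    by left; have [_ [lb _]] := Sx; have [xy _] := lb y Sy; exact: le_trans yu.
  right; apply: (is_meet_fst_ge Sx v01) => y Sy.
  by have [_ [yu|//]] := ST y Sy; exfalso; apply: noS; exists y.
Qed.

Lemma top_ge_proper m : 0 < m -> top_ge m <> @Lcar R.
Proof.
move=> m0 eqL; have : top_ge m (0, true) by rewrite eqL; exact: Lcar0.
by move=> [_ /(_ isT)] /=; rewrite leNgt m0.
Qed.

Lemma bottom_le_proper n : n < 1 -> bottom_le n <> @Lcar R.
Proof.
move=> n1 eqL; have : bottom_le n (1, false) by rewrite eqL; exact: Lcar1.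
by move=> [_ /(_ isT)] /=; rewrite leNgt n1.
Qed.

Lemma avoid_itv_proper u v : 0 <= u -> u < v -> v <= 1 -> avoid_itv u v <> @Lcar R.
Proof.
move=> u0 uv v1 eqL; have [um mv] := midf_lt uv.
have : avoid_itv u v ((u + v) / 2, false).
  by rewrite eqL /Lcar /= (le_trans u0 (ltW um)) (le_trans (ltW mv) v1).
by move=> [_ /= [|]]; apply/negP; rewrite -ltNge.
Qed.

Lemma extendable_top_ge T a m : 0 < m <= 1 -> T `<=` top_ge m -> top_ge m a ->
  extendable T a.
Proof.
move=> /andP[m0 m1] Tm am; exists (top_ge m); split=> //.
  by apply: complete_sublattice_top_ge; rewrite m1 ltW.
exact: top_ge_proper.
Qed.

Lemma extendable_bottom_le T a n : 0 <= n < 1 -> T `<=` bottom_le n -> bottom_le n a ->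
  extendable T a.
Proof.
move=> /andP[n0 n1] Tn an; exists (bottom_le n); split=> //.
  by apply: complete_sublattice_bottom_le; rewrite n0 ltW.
exact: bottom_le_proper.
Qed.

Lemma extendable_avoid_itv T a u v : 0 <= u -> u < v -> v <= 1 ->
  T `<=` avoid_itv u v -> avoid_itv u v a -> extendable T a.
Proof.
move=> u0 uv v1 Tuv auv; exists (avoid_itv u v); split=> //.
  by apply: complete_sublattice_avoid_itv; rewrite ?u0 ?v1 ?(le_trans u0 (ltW uv))
     ?(le_trans (ltW uv) v1).
exact: avoid_itv_proper.
Qed.

Lemma extendable_without_0top T a : complete_sublattice T -> ~ T (0, true) ->
  Lcar a -> a <> (0, true) -> extendable T a.
Proof.
case: a => c b cT nT0 /andP[c0 c1] a0; pose m := inf [set r | T (r, true)].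
have Tm : T (m, true).
  by apply: sublattice_inf_top => //; exists 1; exact: sublattice_top.
have [m0 m1] := andP (sublattice_sub cT Tm).
have m_pos : 0 < m by rewrite lt_def m0 andbT; apply: contra_notN nT0 => /eqP <-.
have m_le r : T (r, true) -> m <= r.
  by apply: ge_inf; exists 0 => s /(sublattice_sub cT) /andP[].
pose m' := if b then Num.min m c else m.
have m'_le : m' <= m by rewrite /m'; case: ifP; rewrite ?ge_min ?lexx.
apply: (@extendable_top_ge _ _ m').
- rewrite (le_trans m'_le m1) andbT /m'; case: ifP => // b1.
  rewrite lt_min m_pos lt_def c0 andbT; apply/eqP => c_0.
  by apply: a0; rewrite c_0 b1.
- move=> [r b'] Trb; split; first exact: sublattice_sub Trb.
  by move=> /= b1; rewrite b1 in Trb; exact: le_trans m'_le (m_le _ Trb).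
- by split=> [|/= b1]; [exact/andP | rewrite /m' b1 ge_min lexx orbT].
Qed.

Lemma extendable_without_1bottom T a : complete_sublattice T -> ~ T (1, false) ->
  Lcar a -> a <> (1, false) -> extendable T a.
Proof.
case: a => c b cT nT1 /andP[c0 c1] a1; pose n := sup [set r | T (r, false)].
have Tn : T (n, false).
  by apply: sublattice_sup_bottom => //; exists 0; exact: sublattice_bottom.
have [n0 n1] := andP (sublattice_sub cT Tn).
have n_lt1 : n < 1 by rewrite lt_def n1 andbT; apply: contra_notN nT1 => /eqP ->.
have le_n r : T (r, false) -> r <= n.
  by apply: ub_le_sup; exists 1 => s /(sublattice_sub cT) /andP[].
pose n' := if b then n else Num.max n c.
have n'_ge : n <= n' by rewrite /n'; case: ifP; rewrite ?le_max ?lexx.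
apply: (@extendable_bottom_le _ _ n').
- rewrite (le_trans n0 n'_ge) /n'; case: ifP => // /negbT b0.
  rewrite gt_max n_lt1 lt_def c1 andbT; apply/eqP => c_1.
  by apply: a1; rewrite c_1 (negbTE b0).
- move=> [r b'] Trb; split; first exact: sublattice_sub Trb.
  by move=> /= /negbTE b0; rewrite b0 in Trb; exact: le_trans (le_n _ Trb) n'_ge.
- by split=> [|/= /negbTE b0]; [exact/andP | rewrite /n' b0 le_max lexx orbT].
Qed.

(* With both corners, T = A x {0, 1} for a closed A that misses some d; the
   elements of A nearest to d on either side bound a gap ]p, q[ of T. *)
Lemma sublattice_gap T : complete_sublattice T -> T (0, true) -> T (1, false) ->
  T <> @Lcar R -> exists p q, [/\ 0 <= p, p < q, q <= 1 & T `<=` avoid_itv p q].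
Proof.
move=> cT T0 T1 TL; have Tswap := sublattice_swap cT T0 T1.
have [d d01 nTd] : exists2 d, 0 <= d <= 1 & forall b, ~ T (d, b).
  apply: contrapT => nod; apply: TL; apply/seteqP; split; first exact: sublattice_sub.
  move=> [d b] d01; apply: contrapT => nTdb; apply: nod; exists d => // b'.
  by move=> /(Tswap _ _ b).
have [d0 d1] := andP d01.
pose p := sup [set r | T (r, false) /\ r <= d].
pose q := inf [set r | T (r, true) /\ d <= r].
have Tp : T (p, false).
  by apply: sublattice_sup_bottom => [||r []] //; exists 0; split=> //; exact: Tswap T0.
have Tq : T (q, true).
  by apply: sublattice_inf_top => [||r []] //; exists 1; split=> //; exact: Tswap T1.
have le_p r : T (r, false) -> r <= d -> r <= p.
  by move=> Tr rd; apply: ub_le_sup => //; exists d => s [].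
have ge_q r : T (r, true) -> d <= r -> q <= r.
  by move=> Tr dr; apply: ge_inf => //; exists d => s [].
have p_lt_d : p < d.
  rewrite lt_def ge_sup ?andbT; first by apply/eqP => dp; apply: (nTd false); rewrite dp.
    by exists 0; split=> //; exact: Tswap T0.
  by move=> s [].
have d_lt_q : d < q.
  rewrite lt_def lb_le_inf ?andbT; first by apply/eqP => qd; apply: (nTd true); rewrite -qd.
    by exists 1; split=> //; exact: Tswap T1.
  by move=> s [].
exists p, q; split; [by case/andP: (sublattice_sub cT Tp) | exact: lt_trans d_lt_q |
  by case/andP: (sublattice_sub cT Tq) |].
move=> [r b] Tr; split; first exact: sublattice_sub Tr.
have [rd|dr] := leP r d; [left; apply: le_p | right; apply: ge_q] => //;
  [exact: Tswap Tr | exact: Tswap Tr | exact: ltW].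
Qed.

Lemma extendable_with_corners T a : complete_sublattice T ->
  T (0, true) -> T (1, false) -> T <> @Lcar R -> Lcar a -> extendable T a.
Proof.
move=> cT T0 T1 TL; case: a => c b Lc.
have [p [q [p0 pq q1 T_avoid]]] := sublattice_gap cT T0 T1 TL.
have [c_le_p|p_lt_c] := leP c p.
  by apply: (extendable_avoid_itv p0 pq q1 T_avoid); split=> //; left.
apply: (@extendable_avoid_itv _ _ p (Num.min q c)) => //.
- by rewrite lt_min p_lt_c pq.
- by rewrite ge_min q1.
- move=> y /T_avoid [Ly [yp|qy]]; split=> //; [left | right] => //.
  by rewrite ge_min qy.
- by split=> //; right; rewrite ge_min lexx orbT.
Qed.

Lemma extendable_noncorner T a : complete_sublattice T -> T <> @Lcar R ->
  Lcar a -> a <> (0, true) -> a <> (1, false) -> extendable T a.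
Proof.
move=> cT TL La a0 a1.
have [T0|nT0] := pselect (T (0, true)); last exact: extendable_without_0top.
have [T1|nT1] := pselect (T (1, false)); last exact: extendable_without_1bottom.
exact: extendable_with_corners.
Qed.

Lemma non_generator_noncorner a : Lcar a -> a <> (0, true) -> a <> (1, false) ->
  non_generator a.
Proof.
by move=> La a0 a1; apply: non_generator_extendable => T cT TL; exact: extendable_noncorner.
Qed.

Lemma not_non_generator_0top : ~ non_generator (0 : R, true).
Proof.
have c1 : complete_sublattice (top_ge 1).
  by apply: complete_sublattice_top_ge; rewrite ler01 lexx.
apply: (not_non_generator c1 (top_ge_proper ltr01)).
apply: generated_Lcar => [p [[]//|->]|T cT XT [r [] r01]]; first exact: Lcar0.
  apply: sublattice_join cT _ (is_join_lift r01) => _ [->|->]; apply: XT; last by right.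
  by left.
by apply: XT; left.
Qed.

Lemma not_non_generator_1bottom : ~ non_generator (1 : R, false).
Proof.
have c0 : complete_sublattice (bottom_le 0).
  by apply: complete_sublattice_bottom_le; rewrite ler01 lexx.
apply: (not_non_generator c0 (bottom_le_proper ltr01)).
apply: generated_Lcar => [p [[]//|->]|T cT XT [r [] r01]]; first exact: Lcar1.
  by apply: XT; left.
apply: sublattice_meet cT _ (is_meet_drop r01) => _ [->|->]; apply: XT; last by right.
by left.
Qed.

Lemma is_join_bottom_lt1 : is_join [set (r, false) | r in `[0, 1[] (1 : R, false).
Proof.
have := @is_join_bottom `[0, 1[; rewrite sup_itv ?bnd_simp //; apply.
  by exists 0; rewrite /= in_itv /= lexx ltr01.
by move=> r; rewrite /= in_itv /= => /andP[-> /ltW].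
Qed.

Lemma is_meet_top_gt0 : is_meet [set (r, true) | r in `]0, 1]] (0 : R, true).
Proof.
have := @is_meet_top `]0, 1]; rewrite inf_itv ?bnd_simp //; apply.
  by exists 1; rewrite /= in_itv /= lexx ltr01.
by move=> r; rewrite /= in_itv /= => /andP[/ltW -> ->].
Qed.

Lemma bottom_lt1_sub_Gamma : [set (r, false) | r in `[0, 1[] `<=` @Gamma R.
Proof.
move=> _ [r + <-]; rewrite /= in_itv /= => /andP[r0 r1].
have Lr : Lcar (r, false) by rewrite /Lcar /= r0 ltW.
split=> //; apply: non_generator_noncorner => // -[r_1].
by rewrite r_1 ltxx in r1.
Qed.

Lemma top_gt0_sub_Gamma : [set (r, true) | r in `]0, 1]] `<=` @Gamma R.
Proof.
move=> _ [r + <-]; rewrite /= in_itv /= => /andP[r0 r1].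
have Lr : Lcar (r, true) by rewrite /Lcar /= r1 ltW.
split=> //; apply: non_generator_noncorner => // -[r_0].
by rewrite r_0 ltxx in r0.
Qed.

End ProductLattice.

Theorem proposition5 (R : realType) :
  (forall a : R * bool, Lcar a ->
     (non_generator a <-> (a <> (0, true) /\ a <> (1, false)))) /\
  ~ complete_sublattice (@Gamma R) /\
  generated (@Gamma R) = @Lcar R.
Proof.
have ngP a : @Lcar R a -> non_generator a <-> a <> (0, true) /\ a <> (1, false).
  move=> La; split=> [ng | [a0 a1]]; last exact: non_generator_noncorner.
  by split=> ea; move: ng; rewrite ea;
    [exact: not_non_generator_0top | exact: not_non_generator_1bottom].
split; first exact: ngP.
split.
  move=> cG; have [_] := sublattice_join cG (@bottom_lt1_sub_Gamma R) (@is_join_bottom_lt1 R).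
  exact: not_non_generator_1bottom.
apply: generated_Lcar => [a []//|T cT GT a La].
have [->|a0] := eqVneq a (0, true).
  exact: sublattice_meet cT (subset_trans (@top_gt0_sub_Gamma R) GT) (@is_meet_top_gt0 R).
have [->|a1] := eqVneq a (1, false).
  exact: sublattice_join cT (subset_trans (@bottom_lt1_sub_Gamma R) GT) (@is_join_bottom_lt1 R).
by apply: GT; split=> //; apply: non_generator_noncorner => //; exact/eqP.
Qed.
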